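(* Let $R$ be an associative ring with identity and involution $*$, and let $a\in R^{\#}\cap R^{\dagger}$. Then $a\in R^{SEP}$ if and only if $a(a^{\#})^*a^{\dagger}$ is a right $a$-idempotent, i.e. $(a(a^{\#})^*a^{\dagger})^2=a(a^{\#})^*a^{\dagger}a$.
   Context: An involution on $R$ is a map $x\mapsto x^*$ with $(x^* )^*=x$, $(x+y)^*=x^*+y^*$, $(xy)^*=y^*x^*$. An element $a$ is Moore–Penrose invertible if there is $b$ with $aba=a$, $bab=b$, $(ab)^*=ab$, $(ba)^*=ba$; such $b$ is unique, denoted $a^{\dagger}$, and $R^{\dagger}$ is the set of such $a$. An element $a$ is group invertible if there is $b$ with $aba=a$, $bab=b$, $ab=ba$; such $b$ is unique, denoted $a^{\#}$, and $R^{\#}$ is the set of such $a$. For $a\in R^{\#}\cap R^{\dagger}$, $a$ is SEP if $a^*=a^{\dagger}=a^{\#}$; $R^{SEP}$ denotes the set of SEP elements. For $e,c\in R$, $e$ is a right $c$-idempotent if $e^2=ec$. *)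

From mathcomp Require Import all_boot all_algebra.
Set Implicit Arguments. Unset Strict Implicit. Unset Printing Implicit Defensive.
Import GRing.Theory.
Local Open Scope ring_scope.

Definition involution (R : ringType) (star : R -> R) : Prop :=
  [/\ forall x, star (star x) = x,
      forall x y, star (x + y) = star x + star y &
      forall x y, star (x * y) = star y * star x].

Definition is_MP_inverse (R : ringType) (star : R -> R) (a b : R) : Prop :=
  [/\ a * b * a = a, b * a * b = b, star (a * b) = a * b & star (b * a) = b * a].

Definition is_group_inverse (R : ringType) (a b : R) : Prop :=
  [/\ a * b * a = a, b * a * b = b & a * b = b * a].

(* a is SEP: a^* = a^dagger = a^#, where adag and asharp are the
   (unique) MP and group inverses of a. *)
Definition is_SEP (R : ringType) (star : R -> R) (a adag asharp : R) : Prop :=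
  star a = adag /\ adag = asharp.

Definition right_idempotent (R : ringType) (c e : R) : Prop := e * e = e * c.

From mathcomp Require Import all_boot all_algebra.
Set Implicit Arguments.
Unset Strict Implicit.
Unset Printing Implicit Defensive.
Import GRing.Theory.
Local Open Scope ring_scope.

(** With [e := a (a^#)^* a^†], the identity [a^† a (a^#)^* = (a^#)^*] lets
    one cancel [a^†] on the left of [e^2 = e a]; applying the involution then
    gives [(a^#)^* a^† = a^† a], i.e. [e = a].  Hence [a = a^2 a^†] and
    [a^# a = a a^†], so [a^#] satisfies the Penrose equations and equals [a^†].
    Finally [e = a] becomes [a^# a = (a^#)^* a^#], whence
    [a^* = a^* a a^# = (a^# a)^* a^# = a^#]. *)

Section GroupInverse.
Variables (R : nzRingType) (a g : R).
Hypothesis ag : is_group_inverse a g.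

Lemma ginv_sqr_mul : g * g * a = g.
Proof. by case: ag => _ gag ca; rewrite -mulrA -ca mulrA. Qed.

Lemma mul_ginv_sqr : a * (g * g) = g.
Proof. by case: ag => _ gag ca; rewrite mulrA ca. Qed.

Lemma ginv_mul_sqr : g * a * a = a.
Proof. by case: ag => aga _ ca; rewrite -ca. Qed.

End GroupInverse.

Section Involution.
Variables (R : nzRingType) (star : R -> R).
Hypothesis star_inv : involution star.

Let starK : involutive star. Proof. by case: star_inv. Qed.
Let starM x y : star (x * y) = star y * star x. Proof. by case: star_inv. Qed.

Lemma star_group_inverse a g :
  is_group_inverse a g -> is_group_inverse (star a) (star g).
Proof. by case=> aga gag ca; split; rewrite -!starM ?mulrA ?aga ?gag ?ca. Qed.

Section MPInverse.
Variables a d : R.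
Hypothesis ad : is_MP_inverse star a d.

Lemma star_mul_mpinv : star a * (a * d) = star a.
Proof. by case: ad => ada _ sad _; rewrite -[a * d]sad -starM ada. Qed.

Lemma mpinv_mul_star : d * a * star a = star a.
Proof. by case: ad => ada _ _ sda; rewrite -[d * a]sda -starM mulrA ada. Qed.

Lemma mpinv_unique d' : is_MP_inverse star a d' -> d' = d.
Proof.
case=> ad'a d'ad' sad' sd'a; case: ad => ada dad sad sda.
have ad'_ad : a * d' = a * d.
  by rewrite -{1}ada -mulrA -sad -sad' -starM mulrA ad'a.
have d'a_da : d' * a = d * a.
  rewrite -{1}ada !mulrA -(mulrA (d' * a)) -sda -sd'a -starM.
  by rewrite !mulrA -(mulrA d) -mulrA ad'a.
by rewrite -d'ad' -mulrA ad'_ad mulrA d'a_da dad.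
Qed.

End MPInverse.

Lemma EP_star_eq_ginv a g :
  is_group_inverse a g -> is_MP_inverse star a g ->
  a * star g * g = a -> star a = g.
Proof.
move=> ag ag_mp e_a; have [_ gag ca] := ag; have [_ _ sag _] := ag_mp.
have gastar : g * a * star g = star g.
  by rewrite -ca -{1}sag -!starM mulrA gag.
have ga : g * a = star g * g by rewrite -{1}e_a !mulrA gastar.
by rewrite -(star_mul_mpinv ag_mp) ca ga mulrA -starM -ca sag ca gag.
Qed.

Section SEP.
Variables a g d : R.
Hypotheses (ag : is_group_inverse a g) (ad : is_MP_inverse star a d).

Lemma mpinv_mul_star_ginv : d * a * star g = star g.
Proof.
have sag := star_group_inverse ag.
by rewrite -{1}(mul_ginv_sqr sag) mulrA (mpinv_mul_star ad) (mul_ginv_sqr sag).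
Qed.

Lemma SEP_right_idempotent :
  is_SEP star a d g -> right_idempotent a (a * star g * d).
Proof.
case=> sa dg; have [aga _ ca] := ag.
have sg : star g = a by rewrite -dg -sa starK.
have aag : a * a * g = a by rewrite -mulrA ca mulrA aga.
by rewrite /right_idempotent sg dg aag.
Qed.

Lemma right_idempotent_sqr :
  right_idempotent a (a * star g * d) ->
  star g * star g * d = star g * d * a.
Proof.
have dag x : d * (a * (star g * x)) = star g * x.
  by rewrite !mulrA mpinv_mul_star_ginv.
by move/(congr1 (fun x => d * x)); rewrite /= -!mulrA !dag !mulrA.
Qed.

Lemma right_idempotent_mul_star_ginv :
  right_idempotent a (a * star g * d) -> star g * d = d * a.
Proof.
move/right_idempotent_sqr => sqr; have [_ _ _ sda] := ad.
have := congr1 star sqr; rewrite !starM !starK !mulrA -starM sda.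
have [aga _ _] := ag; move/(congr1 (fun x => x * a)).
rewrite /= -!mulrA (mulrA g g) (ginv_sqr_mul ag) (mulrA a g) aga => sdg.
by rewrite -sda -sdg starM starK.
Qed.

Lemma right_idempotent_eq :
  right_idempotent a (a * star g * d) -> a * star g * d = a.
Proof.
move/right_idempotent_mul_star_ginv => gsd; have [ada _ _ _] := ad.
by rewrite -mulrA gsd mulrA ada.
Qed.

Lemma ginv_mul_eq_mul_mpinv : a * star g * d = a -> g * a = a * d.
Proof.
move=> e_a; have [_ dad _ _] := ad.
have aad : a * a * d = a by rewrite -{1}e_a -!mulrA (mulrA d) dad mulrA e_a.
by rewrite -{1}aad !mulrA (ginv_mul_sqr ag).
Qed.

Lemma ginv_eq_mpinv : g * a = a * d -> d = g.
Proof.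
move=> ga_ad; apply/esym/(mpinv_unique ad).
have [aga gag ca] := ag; have [_ _ sad _] := ad.
by split; rewrite // ?ca ga_ad.
Qed.

End SEP.

End Involution.

Theorem theorem3p5 (R : ringType) (star : R -> R) (a asharp adag : R) :
  involution star ->
  is_group_inverse a asharp ->
  is_MP_inverse star a adag ->
  is_SEP star a adag asharp <->
  right_idempotent a (a * star asharp * adag).
Proof.
move=> star_inv ag ad; split; first exact: SEP_right_idempotent.
move=> /(right_idempotent_eq star_inv ag ad) e_a.
have dg := ginv_eq_mpinv star_inv ag ad (ginv_mul_eq_mul_mpinv ag ad e_a).
rewrite dg in ad e_a *; split=> //.
exact: EP_star_eq_ginv.
Qed.
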